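(* For every finite bounded commutative BCK-algebra $\mathcal A$, either every $x\in\mathcal A$ satisfies $x\vee\neg x=1$, or $\operatorname{emd}(\mathcal A)\le \frac23$. That is, the equation $x\vee\neg x=1$ has finite satisfiability gap $\frac13$ among bounded commutative BCK-algebras. Moreover the value $\frac23$ is attained: $\operatorname{emd}(\mathcal C_3)=\frac23$ (and in general $\operatorname{emd}(\mathcal C_n)=\frac2n$ for $n\ge2$).
   Context: A BCK-algebra is a set $A$ with a binary operation $\cdot$ and a constant $0$ such that for all $x,y,z\in A$: (BCK1) $((x\cdot y)\cdot(x\cdot z))\cdot(z\cdot y)=0$; (BCK2) $(x\cdot(x\cdot y))\cdot y=0$; (BCK3) $x\cdot x=0$; (BCK4) $0\cdot x=0$; (BCK5) $x\cdot y=0$ and $y\cdot x=0$ imply $x=y$. Define $x\wedge y:=y\cdot(y\cdot x)$; the algebra is commutative if $x\wedge y=y\wedge x$ for all $x,y$. A bounded BCK-algebra is a BCK-algebra with a distinguished element $1$ such that $x\cdot 1=0$ for all $x$; then $\neg x:=1\cdot x$ and $x\vee y:=\neg(\neg x\wedge\neg y)$. For a finite bounded commutative BCK-algebra $\mathcal A$, $\operatorname{emd}(\mathcal A)=|\{x\in\mathcal A: x\vee\neg x=1\}|/|\mathcal A|$. For $n\ge 2$, $\mathcal C_n$ is the BCK-algebra with carrier $\{0,1,\dots,n-1\}$ and $x\cdot y=\max\{x-y,0\}$, regarded as bounded with $1=n-1$. *)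

From mathcomp Require Import all_boot all_order all_algebra.
Set Implicit Arguments.
Unset Strict Implicit.
Unset Printing Implicit Defensive.
Import GRing.Theory Num.Theory.

Definition is_BCK (T : Type) (mul : T -> T -> T) (zero : T) : Prop :=
  (forall x y z, mul (mul (mul x y) (mul x z)) (mul z y) = zero) /\
  (forall x y, mul (mul x (mul x y)) y = zero) /\
  (forall x, mul x x = zero) /\
  (forall x, mul zero x = zero) /\
  (forall x y, mul x y = zero -> mul y x = zero -> x = y).

Definition bmeet (T : Type) (mul : T -> T -> T) (x y : T) : T := mul y (mul y x).

Definition is_commutative_BCK (T : Type) (mul : T -> T -> T) (zero : T) : Prop :=
  is_BCK mul zero /\ forall x y, bmeet mul x y = bmeet mul y x.

Definition is_bounded_commutative_BCK (T : Type) (mul : T -> T -> T) (zero one : T)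
  : Prop :=
  is_commutative_BCK mul zero /\ forall x, mul x one = zero.

Definition bneg (T : Type) (mul : T -> T -> T) (one x : T) : T := mul one x.

Definition bjoin (T : Type) (mul : T -> T -> T) (one x y : T) : T :=
  bneg mul one (bmeet mul (bneg mul one x) (bneg mul one y)).

Definition emd (T : finType) (mul : T -> T -> T) (one : T) : rat :=
  (#|[set x : T | bjoin mul one x (bneg mul one x) == one]|%:R / #|T|%:R)%R.

(* The chain C_n on {0,...,n-1}, x . y = max(x - y, 0) (truncated subtraction). *)
Definition Cmul (n : nat) (x y : 'I_n) : 'I_n :=
  Ordinal (leq_ltn_trans (leq_subr y x) (ltn_ord x)).

Definition Czero (m : nat) : 'I_m.+1 := ord0.
Definition Ctop (m : nat) : 'I_m.+1 := ord_max.

(* An element x satisfies x \/ ~x = 1 exactly when x /\ ~x = 0; call such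
   elements boolean.  If some a is not boolean, the finite nonzero element
   a /\ ~a lies above an atom p with p <= ~p.  Every element is then above p
   or above ~p, so negation injects the boolean elements not above p into
   those above p, and b |-> b /\ ~p injects the boolean elements above p
   into the non-boolean ones.  Hence |boolean| <= 2 |non-boolean|, i.e.
   emd <= 2/3. *)

From mathcomp Require Import all_boot all_order all_algebra zify lra.
Import GRing.Theory Num.Theory.

Set Implicit Arguments.
Unset Strict Implicit.
Unset Printing Implicit Defensive.

Reserved Notation "x ≼ y" (at level 70, no associativity).

Section BCKOrder.

Variables (T : eqType) (mul : T -> T -> T) (zero : T).
Hypothesis bck : is_BCK mul zero.

Local Notation "x ≼ y" := (mul x y = zero).

Let le_mul_mul x y z : mul (mul x y) (mul x z) ≼ mul z y := bck.1 x y z.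
Let le_mul_sub x y : mul x (mul x y) ≼ y := bck.2.1 x y.
Let le0x x : zero ≼ x := bck.2.2.2.1 x.

Lemma bck_lexx x : x ≼ x.
Proof. exact: bck.2.2.1. Qed.

Lemma bck_le_anti x y : x ≼ y -> y ≼ x -> x = y.
Proof. exact: bck.2.2.2.2. Qed.

Lemma bck_mulx0 x : mul x zero = x.
Proof.
apply: bck_le_anti; first by have := le_mul_sub x x; rewrite bck_lexx.
exact: bck_le_anti (le_mul_sub x zero) (le0x _).
Qed.

Lemma bck_le0 x : x ≼ zero -> x = zero.
Proof. by rewrite bck_mulx0. Qed.

Lemma bck_le_trans x y z : x ≼ y -> y ≼ z -> x ≼ z.
Proof. by move=> xy yz; have := le_mul_mul x z y; rewrite xy yz !bck_mulx0. Qed.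

Lemma bck_le_mulr x y z : x ≼ y -> mul z y ≼ mul z x.
Proof. by move=> xy; have := le_mul_mul z y x; rewrite xy bck_mulx0. Qed.

Lemma bck_le_mull x y z : x ≼ y -> mul x z ≼ mul y z.
Proof. by move=> xy; have := le_mul_mul x z y; rewrite xy bck_mulx0. Qed.

Lemma bck_mul_le x y : mul x y ≼ x.
Proof. by have := le_mul_mul x y zero; rewrite le0x !bck_mulx0. Qed.

Lemma bck_meet_le_r x y : bmeet mul x y ≼ y.
Proof. exact: bck_mul_le. Qed.

Section Commutative.

Hypothesis meetC : forall x y, bmeet mul x y = bmeet mul y x.

Lemma bck_meet_le_l x y : bmeet mul x y ≼ x.
Proof. by rewrite meetC; apply: bck_meet_le_r. Qed.

Lemma bck_meet_idPl x y : x ≼ y -> bmeet mul x y = x.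
Proof. by move=> xy; rewrite meetC /bmeet xy bck_mulx0. Qed.

Lemma bck_le_meet x y z : z ≼ x -> z ≼ y -> z ≼ bmeet mul x y.
Proof.
move=> zx zy; rewrite -(bck_meet_idPl zy) /bmeet.
by apply: bck_le_mulr; apply: bck_le_mulr.
Qed.

Section Bounded.

Variable one : T.
Hypothesis le_one : forall x, x ≼ one.

Local Notation neg := (bneg mul one).

Lemma bck_negK x : neg (neg x) = x.
Proof. exact: bck_meet_idPl (le_one x). Qed.

Lemma bck_le_neg x y : x ≼ y -> neg y ≼ neg x.
Proof. exact: bck_le_mulr. Qed.

Lemma bck_mul_neg_le x y : mul x (neg y) ≼ y.
Proof.
have := bck_le_mull (neg y) (le_one x).
by rewrite -[mul one (neg y)]/(neg (neg y)) bck_negK.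
Qed.

Lemma bck_mul_le_neg x y : mul x y ≼ neg y.
Proof. exact: bck_le_mull. Qed.

Definition boolean_elt x := bmeet mul x (neg x) == zero.

Lemma bjoin_negE x : (bjoin mul one x (neg x) == one) = boolean_elt x.
Proof.
rewrite /bjoin bck_negK /boolean_elt meetC.
apply/eqP/eqP => [join1 | meet0]; last by rewrite meet0 /bneg bck_mulx0.
by rewrite -[LHS]bck_negK join1 /bneg bck_lexx.
Qed.

Lemma boolean_neg x : boolean_elt x -> boolean_elt (neg x).
Proof. by rewrite /boolean_elt bck_negK meetC. Qed.

Lemma boolean_le_zero b z : boolean_elt b -> z ≼ b -> z ≼ neg b -> z = zero.
Proof. by move=> /eqP b0 zb znb; apply: bck_le0; have := bck_le_meet zb znb; rewrite b0. Qed.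

End Bounded.

End Commutative.

End BCKOrder.

Section Finite.

Variables (T : finType) (mul : T -> T -> T) (zero : T).
Hypothesis bck : is_BCK mul zero.

Local Notation "x ≼ y" := (mul x y = zero).

Let lexx := bck_lexx bck.
Let le_anti := bck_le_anti bck.
Let le_trans := bck_le_trans bck.

Definition bck_atom p := p != zero /\ forall y, y ≼ p -> y = zero \/ y = p.

Lemma bck_atom_below d : d != zero -> exists2 p, bck_atom p & p ≼ d.
Proof.
move=> d0; pose P y := (y != zero) && (mul y d == zero).
have Pd : P d by rewrite /P d0 lexx eqxx.
pose below y := #|[set z | mul z y == zero]|.
have [p /andP[p0 /eqP pd] p_min] := arg_minnP below Pd.
exists p => //; split=> // y yp.
have [-> | y0] := eqVneq y zero; [by left | right].
have /p_min : P y by rewrite /P y0 (le_trans yp pd) eqxx.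
have sub : [set z | mul z y == zero] \subset [set z | mul z p == zero].
  by apply/subsetP => z; rewrite !inE => /eqP zy; apply/eqP; apply: le_trans zy yp.
rewrite /below => le_card.
have /eqP eq_below : [set z | mul z y == zero] == [set z | mul z p == zero].
  by rewrite eqEcard sub le_card.
have : p \in [set z | mul z y == zero] by rewrite eq_below inE lexx.
by rewrite inE => /eqP py; apply: le_anti.
Qed.

Variable one : T.
Hypothesis meetC : forall x y, bmeet mul x y = bmeet mul y x.
Hypothesis le_one : forall x, x ≼ one.

Local Notation neg := (bneg mul one).
Local Notation meet := (bmeet mul).
Local Notation boolean := (boolean_elt mul zero one).

Let negK := bck_negK bck meetC le_one.
Let le_neg := bck_le_neg bck one.

Lemma atom_le_neg_of_nonboolean a : ~~ boolean a -> exists2 p, bck_atom p & p ≼ neg p.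
Proof.
move=> a_nb; have [p p_atom p_le] := bck_atom_below a_nb.
have d_le_neg : meet a (neg a) ≼ neg (meet a (neg a)).
  exact: le_trans (bck_meet_le_r bck _ _) (le_neg (bck_meet_le_l bck meetC _ _)).
exists p => //; exact: le_trans p_le (le_trans d_le_neg (le_neg p_le)).
Qed.

Variable p : T.
Hypotheses (p_atom : bck_atom p) (p_le_neg : p ≼ neg p).

Lemma atom_le_or_le_neg b : p ≼ b \/ p ≼ neg b.
Proof.
have [meet0 | meetp] := p_atom.2 _ (bck_meet_le_l bck meetC p b).
  right; apply: (bck_le0 bck).
  have := bck_le_meet bck meetC (bck_mul_le bck p (neg b)) (bck_mul_neg_le bck meetC le_one p b).
  by rewrite meet0.
by left; rewrite -meetp; apply: bck_meet_le_r.
Qed.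

Lemma card_boolean_not_above_le :
  #|[set b | boolean b & mul p b != zero]| <= #|[set b | boolean b & mul p b == zero]|.
Proof.
rewrite -(@card_in_imset _ _ neg) => [|b b' _ _ eq_neg]; last first.
  by rewrite -[b]negK eq_neg negK.
apply/subset_leq_card/subsetP => _ /imsetP[b + ->]; rewrite !inE => /andP[b_bool p_nle].
rewrite (boolean_neg bck meetC le_one b_bool) /=.
by case: (atom_le_or_le_neg b) => [p_le | ->]; rewrite ?p_le ?eqxx in p_nle *.
Qed.

Lemma meet_neg_atom_nonboolean b : p ≼ b -> ~~ boolean (meet b (neg p)).
Proof.
move=> p_le; apply/negP => meet_bool; move: p_atom.1 => /eqP; apply.
apply: (boolean_le_zero bck meetC meet_bool).
  exact: (bck_le_meet bck meetC p_le p_le_neg).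
by have := le_neg (bck_meet_le_r bck b (neg p)); rewrite negK.
Qed.

Lemma meet_neg_atom_le b b' : boolean b' -> p ≼ b' ->
  meet b (neg p) = meet b' (neg p) -> b ≼ b'.
Proof.
move=> b'_bool p_le' eq_meet.
have meet_le_b' : meet b (neg p) ≼ b' by rewrite eq_meet; apply: bck_meet_le_l.
have mul_meetE : mul b (meet b (neg p)) = mul b (neg p).
  by rewrite meetC; apply: (bck_meet_idPl bck meetC); apply: bck_mul_le.
have le_p : mul b b' ≼ p.
  apply: le_trans _ (bck_mul_neg_le bck meetC le_one b p); rewrite -mul_meetE.
  exact: bck_le_mulr meet_le_b'.
apply: (boolean_le_zero bck meetC b'_bool); first exact: le_trans le_p p_le'.
exact: bck_mul_le_neg.
Qed.

Lemma card_boolean_above_le :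
  #|[set b | boolean b & mul p b == zero]| <= #|[set b | ~~ boolean b]|.
Proof.
rewrite -(@card_in_imset _ _ (meet^~ (neg p))) => [|b b']; last first.
  rewrite !inE => /andP[b_bool /eqP p_le] /andP[b'_bool /eqP p_le'] eq_meet.
  apply: le_anti; exact: meet_neg_atom_le.
apply/subset_leq_card/subsetP => _ /imsetP[b + ->]; rewrite !inE => /andP[_ /eqP p_le].
exact: meet_neg_atom_nonboolean.
Qed.

Lemma card_boolean_le_two_thirds : 3 * #|[set b | boolean b]| <= 2 * #|T|.
Proof.
set B := [set b | boolean b]; set L := [set b | mul p b == zero].
have := card_boolean_not_above_le; have := card_boolean_above_le.
have -> : [set b | boolean b & mul p b == zero] = B :&: L by apply/setP => b; rewrite !inE.
have -> : [set b | boolean b & mul p b != zero] = B :\: L by apply/setP => b; rewrite !inE andbC.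
have -> : [set b | ~~ boolean b] = ~: B by apply/setP => b; rewrite !inE.
have := cardsID L B; have := cardsC B.
lia.
Qed.

End Finite.

Lemma bounded_commutative_BCK_card_gap (T : finType) (mul : T -> T -> T) (zero one : T) :
  is_bounded_commutative_BCK mul zero one ->
  (forall x, bjoin mul one x (bneg mul one x) = one) \/
  3 * #|[set x | bjoin mul one x (bneg mul one x) == one]| <= 2 * #|T|.
Proof.
move=> [[bck meetC] le_one].
have joinE x := bjoin_negE bck meetC le_one x.
have [/forallP all_bool | /forallPn[a a_nb]] := boolP [forall x, boolean_elt mul zero one x].
  by left=> x; apply/eqP; rewrite joinE.
right; have [p p_atom p_le_neg] := atom_le_neg_of_nonboolean bck meetC a_nb.
have -> : [set x | bjoin mul one x (bneg mul one x) == one] = [set x | boolean_elt mul zero one x].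
  by apply/setP => x; rewrite !inE joinE.
exact: card_boolean_le_two_thirds p_atom p_le_neg.
Qed.

Lemma Cmul_bounded_commutative_BCK m :
  is_bounded_commutative_BCK (@Cmul m.+2) (Czero m.+1) (Ctop m.+1).
Proof.
do !split.
- by move=> x y z; apply: val_inj => /=; lia.
- by move=> x y; apply: val_inj => /=; lia.
- by move=> x; apply: val_inj => /=; lia.
- by move=> x; apply: val_inj.
- by move=> x y /(congr1 val) /= xy /(congr1 val) /= yx; apply: val_inj => /=; lia.
- by move=> x y; apply: val_inj; rewrite /bmeet /=; lia.
- by move=> x; apply: val_inj => /=; have := ltn_ord x; lia.
Qed.

Lemma emd_Cmul m : emd (@Cmul m.+2) (Ctop m.+1) = (2%:R / m.+2%:R)%R.
Proof.
rewrite /emd card_ord.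
suff -> : [set x | bjoin (@Cmul m.+2) (Ctop m.+1) x (bneg (@Cmul m.+2) (Ctop m.+1) x)
                   == Ctop m.+1] = [set ord0; ord_max] by rewrite cards2.
apply/setP => x; rewrite !inE -!(inj_eq val_inj) /=.
case: x => [[|k] lt_k] /=; first by apply/eqP; lia.
by apply/eqP/eqP; lia.
Qed.

Local Open Scope ring_scope.

Lemma emd_le_two_thirds (T : finType) (mul : T -> T -> T) (one : T) :
  (3 * #|[set x | bjoin mul one x (bneg mul one x) == one]| <= 2 * #|T|)%N ->
  emd mul one <= 2%:R / 3%:R.
Proof.
rewrite /emd; set s := #|_| => card_le.
have [-> | T_gt0] := posnP #|T|; first by rewrite invr0 mulr0; lra.
rewrite ler_pdivrMr; last by rewrite ltr0n.
have : (3 * s)%:R <= (2 * #|T|)%:R :> rat by rewrite ler_nat.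
rewrite !natrM; clearbody s; lra.
Qed.

Theorem theorem4p2 :
  (forall (T : finType) (mul : T -> T -> T) (zero one : T),
      is_bounded_commutative_BCK mul zero one ->
      (forall x : T, bjoin mul one x (bneg mul one x) = one)
      \/ emd mul one <= 2%:R / 3%:R) /\
  emd (@Cmul 3) (Ctop 2) = 2%:R / 3%:R /\
  (forall m : nat,
      is_bounded_commutative_BCK (@Cmul m.+2) (Czero m.+1) (Ctop m.+1) /\
      emd (@Cmul m.+2) (Ctop m.+1) = 2%:R / (m.+2)%:R).
Proof.
split; last split; last by move=> m; split; [exact: Cmul_bounded_commutative_BCK | exact: emd_Cmul].
- move=> T mul zero one bcbck.
  case: (bounded_commutative_BCK_card_gap bcbck) => [all_bool | card_le]; first by left.
  by right; apply: emd_le_two_thirds.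
- exact: emd_Cmul 1.
Qed.
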